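(* For $n\ge 3$ let $M_n$ be the Cayley graph $\mathrm{Cay}(\mathbb{Z}_{2n},\{\pm1,\pm(n-1),n\})$. Then $Z_+(M_n)=n+2$.
   Context: $\mathrm{Cay}(\mathbb{Z}_{2n},S)$ has vertex set $\mathbb{Z}_{2n}$ with $x\sim y$ iff $x-y\in S$. $Z_+(G)$ is the positive zero forcing number: the minimum size of a set $B$ of initially black vertices such that repeated application of the rule ''let $W_1,\dots,W_k$ be the vertex sets of components of $G$ minus the black vertices; a black vertex $u$ whose only white neighbour in the subgraph induced by $W_i\cup(\text{black vertices})$ is $w$ may turn $w$ black'' eventually makes all vertices black. *)

From mathcomp Require Import all_boot.
Set Implicit Arguments. Unset Strict Implicit. Unset Printing Implicit Defensive.

(* Cayley graph Cay(Z_m, S) on vertex set 'I_m (the residues 0..m-1):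
   x ~ y iff (x - y) mod m lies in S, where S is given as a set of residues. *)
Definition cayley (m : nat) (S : pred nat) : rel 'I_m :=
  fun x y => ((x + m - y) %% m) \in S.
Arguments cayley : clear implicits.

(* M_n = Cay(Z_{2n}, {±1, ±(n-1), n}); residues of 1, -1, n-1, -(n-1), n mod 2n. *)
Definition Mn_conn (n : nat) : pred nat :=
  fun d => d \in [:: 1; 2 * n - 1; n - 1; n + 1; n].

Definition Mn (n : nat) : rel 'I_(2 * n) := cayley (2 * n) (Mn_conn n).
Arguments Mn : clear implicits.

Section PSDForcing.
Variable V : finType.
Variable e : rel V.

Definition white_conn (S : {set V}) : rel V :=
  connect [rel x y | e x y && (x \notin S) && (y \notin S)].

(* Positive semidefinite color-change rule: black u forces white w if w is the
   only white neighbour of u inside the component W of G - S containing w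
   (i.e. the only white neighbour of u in G[W ∪ S]). *)
Definition psd_force (S : {set V}) (u w : V) : Prop :=
  [/\ u \in S, w \notin S, e u w &
      forall w', w' \notin S -> white_conn S w w' -> e u w' -> w' = w].

Inductive psd_reach (B : {set V}) : {set V} -> Prop :=
| psd_reach_refl : psd_reach B B
| psd_reach_step S u w : psd_reach B S -> psd_force S u w -> psd_reach B (w |: S).

Definition psd_forcing_set (B : {set V}) : Prop := psd_reach B [set: V].

Definition Zplus_eq (k : nat) : Prop :=
  (exists B : {set V}, psd_forcing_set B /\ #|B| = k) /\
  (forall B : {set V}, psd_forcing_set B -> k <= #|B|).
End PSDForcing.
Arguments Zplus_eq {V} e k.
Arguments psd_forcing_set {V} e B.

From mathcomp Require Import all_boot zify.
From Stdlib Require Import Classical.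
Set Implicit Arguments. Unset Strict Implicit. Unset Printing Implicit Defensive.

(* M_n is the strong product of the n-cycle with K_2: vertex x lies in column
   x mod n, and two distinct vertices are adjacent iff their columns are equal
   or consecutive on the cycle.  A forced vertex w always has a black twin
   w + n (mod 2n), for otherwise the twin would be a second white neighbour of
   the forcing vertex in the component of w.  Hence "some column is entirely
   white, or at most one column is entirely black" is preserved by forcing: a
   white column stays white, and when at most one column is black no force is
   possible at all, because the white vertices outside that black column form a
   single component.  A set of at most n + 1 vertices has this property and the
   whole vertex set does not, so Z_+ >= n + 2.  Conversely, starting from
   {0, ..., n + 1}, vertex j - 1 forces n + j for j = 2, ..., n - 1. *)

Section PSDForcingFacts.
Variables (V : finType) (e : rel V).

Lemma white_conn_edge (S : {set V}) x y :
  x \notin S -> y \notin S -> e x y -> white_conn e S x y.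
Proof. by move=> xS yS exy; apply: connect1; rewrite /= exy xS yS. Qed.

Lemma white_conn_sym (S : {set V}) : symmetric e -> symmetric (white_conn e S).
Proof. by move=> e_sym; apply: sym_connect_sym => x y /=; rewrite e_sym andbAC. Qed.

Lemma psd_force_common_nbr (S : {set V}) u w x :
  psd_force e S u w -> x \notin S -> e w x -> e u x -> x = w.
Proof. by case=> _ wS _ uniq_w xS ewx; apply: uniq_w => //; apply: white_conn_edge. Qed.

Lemma psd_reach_inv (P : {set V} -> Prop) (B S : {set V}) :
  (forall T u w, P T -> psd_force e T u w -> P (w |: T)) ->
  P B -> psd_reach e B S -> P S.
Proof. by move=> P_force PB; elim=> // T u w _; apply: P_force. Qed.

End PSDForcingFacts.

Lemma modn_add_sub m x y : x < m -> y < m ->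
  (x + m - y) %% m = if y <= x then x - y else x + m - y.
Proof.
move=> x_lt y_lt; case: leqP => yx; last by rewrite modn_small; lia.
have -> : x + m - y = (x - y) + m by lia.
by rewrite modnDr modn_small; lia.
Qed.

Lemma card_set_ltn m k : k <= m -> #|[set x : 'I_m | x < k]| = k.
Proof.
move=> k_le; have -> : [set x : 'I_m | x < k] = [set widen_ord k_le i | i in 'I_k].
  apply/setP => x; rewrite inE; apply/idP/imsetP => [x_lt | [y _ ->]]; last exact: (ltn_ord y).
  by exists (Ordinal x_lt) => //; apply: val_inj.
rewrite card_imset ?card_ord // => i j /(congr1 val) /= ij.
exact: val_inj.
Qed.

Section Mn.
Variable n : nat.
Hypothesis n_ge3 : 3 <= n.
Local Notation vtx := 'I_(2 * n).

Definition cyc_near (a b : nat) : Prop :=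
  a = b \/ a.+1 = b \/ b.+1 = a \/ (a = 0 /\ b.+1 = n) \/ (b = 0 /\ a.+1 = n).

Lemma cyc_near_sym a b : cyc_near a b -> cyc_near b a.
Proof. rewrite /cyc_near; lia. Qed.

Lemma cyc_two_nbrs c : c < n -> exists p m,
  [/\ p < n, m < n, cyc_near c p, cyc_near c m & [/\ p <> c, m <> c & p <> m]].
Proof.
move=> c_lt; case: (ltnP c.+1 n) => c1; case: (posnP c) => c0;
  [exists c.+1, n.-1 | exists c.+1, c.-1 | exists 0, n.-1 | exists 0, c.-1];
  rewrite /cyc_near; split; try split; lia.
Qed.

Lemma cyc_other_nbr a b : a < n -> b < n -> a <> b ->
  exists c, [/\ c < n, cyc_near a c, c <> b & c <> a].
Proof.
move=> a_lt b_lt ab; have [p [m [p_lt m_lt ap am [pa ma pm]]]] := cyc_two_nbrs a_lt.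
by case: (eqVneq p b) => [pb | /eqP pb]; [exists m | exists p]; split => //; lia.
Qed.

Definition col (x : nat) : nat := if x < n then x else x - n.

Lemma col_lt x : x < 2 * n -> col x < n.
Proof. by rewrite /col; case: ifP; lia. Qed.

Lemma MnE (x y : vtx) : Mn n x y <-> (x : nat) <> y /\ cyc_near (col x) (col y).
Proof.
rewrite /Mn /cayley /Mn_conn unfold_in modn_add_sub ?ltn_ord //.
rewrite !inE -!(rwP orP) -!(rwP eqP) /cyc_near /col.
case: x y => [x x_lt] [y y_lt] /=.
have low_or_high z : z < 2 * n -> z < n \/ exists2 a, a < n & z = a + n.
  by move=> z_lt; case: (ltnP z n) => h; [left | right; exists (z - n)]; lia.
case: (low_or_high x x_lt) => [xn | [a a_lt ->]];
  case: (low_or_high y y_lt) => [yn | [b b_lt ->]];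
  rewrite ?xn ?yn ?ltnNge ?leq_addl ?addnK /=; case: leqP => ?; split.
all: first [ by case=> [?|[?|[?|[?|?]]]]; split; lia
           | by case=> ? [?|[?|[?|[[? ?]|[? ?]]]]]; lia ].
Qed.

Lemma Mn_sym : symmetric (Mn n).
Proof.
move=> x y; apply/idP/idP => /MnE [xy near];
  by apply/MnE; split => [/esym // |]; apply: cyc_near_sym.
Qed.

Lemma Mn_irrefl : irreflexive (Mn n).
Proof. by move=> x; apply/negbTE/negP => /MnE []. Qed.

Lemma Mn_black_white (S : {set vtx}) u x :
  u \in S -> x \notin S -> cyc_near (col u) (col x) -> Mn n u x.
Proof. by move=> uS xS near; apply/MnE; split=> // /val_inj ux; rewrite -ux uS in xS. Qed.

Lemma Mn_white_white (S : {set vtx}) x y : x \notin S -> y \notin S ->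
  (x : nat) <> y -> cyc_near (col x) (col y) -> white_conn (Mn n) S x y.
Proof. by move=> xS yS xy near; apply: white_conn_edge => //; apply/MnE. Qed.

Definition twin_val (x : nat) : nat := if x < n then x + n else x - n.

Lemma twin_subproof (x : vtx) : twin_val x < 2 * n.
Proof. by rewrite /twin_val; have := ltn_ord x; case: ifP; lia. Qed.

Definition twin (x : vtx) : vtx := Ordinal (twin_subproof x).

Lemma col_twin x : col (twin x) = col x.
Proof. by rewrite /col /= /twin_val; have := ltn_ord x; case: (ltnP x n); case: ifP; lia. Qed.

Lemma Mn_twin x : Mn n x (twin x).
Proof.
apply/MnE; rewrite col_twin; split; last by left.
by rewrite /= /twin_val; case: ifP; lia.
Qed.

Lemma psd_force_twin (S : {set vtx}) u w : psd_force (Mn n) S u w -> twin w \in S.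
Proof.
move=> f; have [uS _ /MnE [_ near_uw] _] := f.
apply: contraT => twS.
have tw_w : twin w = w.
  by apply: psd_force_common_nbr f twS (Mn_twin w) (Mn_black_white uS twS _); rewrite col_twin.
by move: (Mn_twin w); rewrite tw_w Mn_irrefl.
Qed.

Definition col_white (S : {set vtx}) c := forall x : vtx, col x = c -> x \notin S.
Definition col_black (S : {set vtx}) c := forall x : vtx, col x = c -> x \in S.

Definition at_most_one_black_col (S : {set vtx}) :=
  forall c1 c2, c1 < n -> c2 < n -> col_black S c1 -> col_black S c2 -> c1 = c2.

Lemma not_col_black (S : {set vtx}) c :
  ~ col_black S c -> exists2 x : vtx, col x = c & x \notin S.
Proof.
move=> not_black; apply: NNPP => no_white; apply: not_black => x cx.
by case: (boolP (x \in S)) => // xS; case: no_white; exists x.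
Qed.

Lemma white_conn_outside_col (S : {set vtx}) d : d < n ->
  (forall c, c < n -> c <> d -> ~ col_black S c) ->
  forall x y : vtx, x \notin S -> y \notin S -> col x <> d -> col y <> d ->
  white_conn (Mn n) S x y.
Proof.
move=> d_lt not_black.
pose shift k := if d + k < n then d + k else d + k - n.
have white_at k : 0 < k < n -> exists2 x : vtx, col x = shift k & x \notin S.
  by move=> k_lt; apply/not_col_black/not_black; rewrite /shift; case: ifP; lia.
have [w0 cw0 w0S] := white_at 1 ltac:(lia).
have w0_conn k : k.+1 < n -> forall z : vtx, z \notin S -> col z = shift k.+1 ->
    white_conn (Mn n) S w0 z.
  elim: k => [_ | k IH k_lt] z zS cz.
    have [-> | zw0] := eqVneq z w0; first exact: connect0.
    apply: Mn_white_white => //; last by rewrite cw0 cz; left.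
    by move=> /val_inj w0z; rewrite w0z eqxx in zw0.
  have [y cy yS] := white_at k.+1 ltac:(lia).
  have y_conn := IH (ltnW k_lt) y yS cy.
  apply: connect_trans y_conn (Mn_white_white yS zS _ _).
    by move=> /val_inj yz; move: cz; rewrite -yz cy /shift; case: ifP; case: ifP; lia.
  by rewrite cy cz /cyc_near /shift; case: ifP; case: ifP; lia.
have all_conn z : z \notin S -> col z <> d -> white_conn (Mn n) S w0 z.
  move=> zS cz; have cz_lt := col_lt (ltn_ord z).
  case: (ltnP d (col z)) => dz;
    [apply: (w0_conn (col z - d).-1) | apply: (w0_conn (col z + n - d).-1)] => //;
    try (rewrite /shift; case: ifP); lia.
move=> x y xS yS cx cy.
apply: connect_trans (_ : white_conn (Mn n) S x w0) (all_conn y yS cy).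
by rewrite (white_conn_sym _ Mn_sym) all_conn.
Qed.

Lemma psd_force_black_col (S : {set vtx}) u w c : psd_force (Mn n) S u w ->
  cyc_near (col u) c -> cyc_near (col w) c -> c <> col w -> col_black S c.
Proof.
move=> f near_u near_w cw x cx; have [uS wS _ _] := f.
case: (boolP (x \in S)) => // xS; exfalso.
have wx : Mn n w x.
  by apply/MnE; split; [move=> /val_inj wx; apply: cw; rewrite -cx -wx | rewrite cx].
have ux : Mn n u x by apply: (Mn_black_white uS xS); rewrite cx.
by apply: cw; rewrite -cx (psd_force_common_nbr f xS wx ux).
Qed.

Lemma Mn_no_force (S : {set vtx}) u w :
  at_most_one_black_col S -> ~ psd_force (Mn n) S u w.
Proof.
move=> one_black f; have [uS wS /MnE [_ near_uw] uniq_w] := f.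
have cu_lt := col_lt (ltn_ord u); have cw_lt := col_lt (ltn_ord w).
have [cuw | /eqP cuw] := eqVneq (col u) (col w).
  (* Both cycle neighbours of the common column would have to be black. *)
  have [p [m [p_lt m_lt near_p near_m [pw mw pm]]]] := cyc_two_nbrs cw_lt.
  by apply: pm; apply: one_black => //; apply: (psd_force_black_col f); rewrite ?cuw.
(* The column of u is black, hence the only black column; so the white vertices
   outside it form one component, containing w and a white neighbour of u in a
   third column. *)
have black_u : col_black S (col u).
  by apply: (psd_force_black_col f); [left | apply: cyc_near_sym |].
have not_black c : c < n -> c <> col u -> ~ col_black S c.
  by move=> c_lt cu black_c; apply: cu; apply: one_black.
have [c [c_lt near_uc cw cu]] := cyc_other_nbr cu_lt cw_lt cuw.
have [x cx xS] := not_col_black (not_black c c_lt cu).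
have ux : Mn n u x by apply: (Mn_black_white uS xS); rewrite cx.
have wx : white_conn (Mn n) S w x.
  by apply: (white_conn_outside_col _ not_black) => //; rewrite ?cx //; move/esym.
by apply: cw; rewrite -cx (uniq_w x xS wx ux).
Qed.

Definition white_col_or_one_black_col (S : {set vtx}) :=
  (exists2 c, c < n & col_white S c) \/ at_most_one_black_col S.

Lemma white_col_or_one_black_col_force (S : {set vtx}) u w :
  white_col_or_one_black_col S -> psd_force (Mn n) S u w ->
  white_col_or_one_black_col (w |: S).
Proof.
case=> [[c c_lt white_c] f | one_black /(Mn_no_force one_black) //].
left; exists c => // x cx; rewrite in_setU1 negb_or white_c // andbT.
apply/eqP => xw; move: (white_c (twin w)).
by rewrite col_twin (psd_force_twin f) -xw cx => /(_ erefl).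
Qed.

Lemma not_white_col_or_one_black_col_setT : ~ white_col_or_one_black_col [set: vtx].
Proof.
case=> [[c c_lt white_c] | one_black].
  have c_lt2 : c < 2 * n by lia.
  by have := white_c (Ordinal c_lt2); rewrite in_setT /col /= c_lt => /(_ erefl).
by have := one_black 0 1 ltac:(lia) ltac:(lia) (fun x _ => in_setT x) (fun x _ => in_setT x).
Qed.

Definition col_ord (x : vtx) : 'I_n := Ordinal (col_lt (ltn_ord x)).

Lemma card_ge_of_black_cols (B : {set vtx}) c1 c2 :
  c1 < n -> c2 < n -> c1 <> c2 -> col_black B c1 -> col_black B c2 ->
  (forall c, c < n -> exists2 x : vtx, col x = c & x \in B) ->
  n + 2 <= #|B|.
Proof.
move=> c1_lt c2_lt c12 black1 black2 meets.
have hi_lt c : c < n -> c + n < 2 * n by lia.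
pose a1 := Ordinal (hi_lt c1 c1_lt); pose a2 := Ordinal (hi_lt c2 c2_lt).
have col_hi c (c_lt : c < n) : col (Ordinal (hi_lt c c_lt)) = c.
  by rewrite /col /=; case: ifP; lia.
have a12 : a1 != a2 by apply/eqP => /(congr1 val) /=; lia.
have sub : [set a1; a2] \subset B.
  by apply/subsetP => x; rewrite !inE => /orP[] /eqP ->;
    [apply: black1 | apply: black2]; apply: col_hi.
have onto : [set: 'I_n] \subset col_ord @: (B :\: [set a1; a2]).
  apply/subsetP => i _; have i_lt := ltn_ord i.
  suff [x cx xB] : exists2 x : vtx, col x = i & x \in B :\: [set a1; a2].
    by apply/imsetP; exists x => //; apply: val_inj; rewrite /= cx.
  have [i12 | i12] := boolP ((i == c1 :> nat) || (i == c2 :> nat)).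
    have lo_lt : (i : nat) < 2 * n by lia.
    have col_lo : col (Ordinal lo_lt) = i by rewrite /col /= i_lt.
    exists (Ordinal lo_lt) => //; rewrite !inE -!val_eqE /=.
    by case/orP: i12 => /eqP i_c; [rewrite black1 | rewrite black2]; rewrite ?andbT //; lia.
  have [x cx xB] := meets i i_lt; exists x => //.
  rewrite !inE xB andbT; apply/negP => /orP[] /eqP x_a; move: i12;
    by rewrite -cx x_a col_hi eqxx ?orbT.
have := subset_leq_card onto; rewrite cardsT card_ord => n_le.
rewrite -(cardsID [set a1; a2] B) (setIidPr sub) cards2 a12 addnC leq_add2l.
exact: leq_trans n_le (leq_imset_card _ _).
Qed.

Lemma white_col_or_one_black_col_card (B : {set vtx}) :
  #|B| < n + 2 -> white_col_or_one_black_col B.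
Proof.
move=> small; apply: NNPP => not_inv.
have meets c : c < n -> exists2 x : vtx, col x = c & x \in B.
  move=> c_lt; apply: NNPP => none; apply: not_inv; left; exists c => // x cx.
  by apply/negP => xB; apply: none; exists x.
have [c1 [c2 [c1_lt c2_lt black1 black2 c12]]] :
    exists c1 c2, [/\ c1 < n, c2 < n, col_black B c1, col_black B c2 & c1 <> c2].
  apply: NNPP => none; apply: not_inv; right => c1 c2 c1_lt c2_lt black1 black2.
  by apply: NNPP => c12; apply: none; exists c1, c2.
by move: small; rewrite ltnNge (card_ge_of_black_cols c1_lt c2_lt c12 black1 black2 meets).
Qed.

Lemma psd_forcing_set_card_ge (B : {set vtx}) :
  psd_forcing_set (Mn n) B -> n + 2 <= #|B|.
Proof.
move=> forcing; rewrite leqNgt; apply/negP => /white_col_or_one_black_col_card inv_B.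
apply: not_white_col_or_one_black_col_setT.
exact: psd_reach_inv white_col_or_one_black_col_force inv_B forcing.
Qed.

Lemma prefix_reach j : 2 <= j <= n ->
  psd_reach (Mn n) [set x : vtx | x < n + 2] [set x : vtx | x < n + j].
Proof.
elim: j => [| j IH] j_bd; first by lia.
have [-> | j_ge2] := eqVneq j 1; first exact: psd_reach_refl.
have w_lt : n + j < 2 * n by lia.
have u_lt : j - 1 < 2 * n by lia.
have -> : [set x : vtx | x < n + j.+1] = Ordinal w_lt |: [set x : vtx | x < n + j].
  by apply/setP => x; rewrite !inE -val_eqE /= addnS ltnS leq_eqVlt.
apply: (psd_reach_step (IH ltac:(lia)) (_ : psd_force _ _ (Ordinal u_lt) _)).
split; rewrite ?inE /= ?ltnn //; first by lia.
  by apply/MnE; rewrite /cyc_near /col /=; split; [lia | case: ifP; case: ifP; lia].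
move=> x; rewrite inE -leqNgt => x_ge _ /MnE [ux near]; apply: val_inj => /=.
by move: near; rewrite /cyc_near /col /=; have := ltn_ord x; case: ifP; case: ifP; lia.
Qed.

Lemma prefix_forcing_set : psd_forcing_set (Mn n) [set x : vtx | x < n + 2].
Proof.
rewrite /psd_forcing_set (_ : [set: vtx] = [set x : vtx | x < n + n]).
  by apply: prefix_reach; lia.
by apply/setP => x; rewrite !inE addnn -mul2n ltn_ord.
Qed.

End Mn.

Theorem mainTheorem18 (n : nat) (hn : 3 <= n) : Zplus_eq (Mn n) (n + 2).
Proof.
split; last exact: psd_forcing_set_card_ge hn.
exists [set x : 'I_(2 * n) | x < n + 2]; split; first exact: prefix_forcing_set.
by rewrite card_set_ltn; lia.
Qed.
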